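(* Let $G$ be a finite permutation group acting quasi-transitively on a finite set $\Omega$, with constant $t>1$, and suppose $G$ is not transitive on $\Omega$. If $G$ acts $2$-transitively on a $G$-orbit $\Delta$, then $|G|=|\Delta|(|\Delta|-1)t$. Consequently $G$ acts $2$-transitively on at most one of its orbits on $\Omega$.
   Context: A finite permutation group $G$ on a finite set $\Omega$ is called quasi-transitive if there is a natural number $t>1$ such that $|G_{\alpha\beta}|=t$ for all two-element subsets $\{\alpha,\beta\}\subseteq\Omega$, where $G_{\alpha\beta}$ denotes the pointwise stabiliser of $\alpha$ and $\beta$ in $G$. *)

From mathcomp Require Import all_boot all_fingroup.
From mathcomp Require Import primitive_action.
Local Open Scope group_scope.
Set Implicit Arguments. Unset Strict Implicit. Unset Printing Implicit Defensive.

Definition quasi_transitive_with (T : finType) (G : {group {perm T}}) (t : nat) :=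
  1 < t /\ forall a b : T, a != b -> #|'C_G([set a; b] | 'P)| = t.

Definition is_orbit (T : finType) (G : {group {perm T}}) (D : {set T}) :=
  D \in orbit 'P G @: [set: T].

From mathcomp Require Import all_boot all_fingroup.
From mathcomp Require Import primitive_action.
From mathcomp Require Import zify.

(* If G is 2-transitive on an orbit D, the stabiliser G_a of a in D is
   transitive on D \ a with point stabilisers G_ab of order t, so
   |G_a| = (|D| - 1) t and |G| = |D| (|D| - 1) t.  Moreover |G_a| > t: if
   |G_a| = t then G_a = G_ab for every b <> a, so G_a fixes every point and
   t = 1.  Two 2-transitive orbits D1 <> D2 have the same size n by the order
   formula, and for a in D1 the group G_a acts on D2 with all orbits of size
   |G_a| / t = n - 1 > 1; but then n - 1 would divide n. *)

Set Implicit Arguments. Unset Strict Implicit. Unset Printing Implicit Defensive.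

Local Open Scope group_scope.

Lemma mul_pred_inj m n :
  0 < m -> 0 < n -> (m * (m - 1) = n * (n - 1))%N -> m = n.
Proof. by move=> *; nia. Qed.

Lemma uniform_orbits_dvdn (aT : finGroupType) (rT : finType)
    (to : {action aT &-> rT}) (H : {group aT}) (S : {set rT}) (m : nat) :
    [acts H, on S | to] -> {in S, forall x, #|orbit to H x| = m} ->
  (m %| #|S|)%N.
Proof.
move=> actsHS orbitS; rewrite -(acts_sum_card_orbit actsHS).
by apply: dvdn_sum => _ /imsetP[x Sx ->]; rewrite orbitS.
Qed.

Lemma ntransitive2_card_gt1 (aT : finGroupType) (rT : finType)
    (to : {action aT &-> rT}) (G : {group aT}) (S : {set rT}) :
  [transitive^2 G, on S | to] -> 1 < #|S|.
Proof.
case/imsetP=> u; rewrite inE => /andP[uniq_u sub_uS] _.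
by rewrite -(card_uniq_tuple uniq_u) subset_leq_card.
Qed.

Lemma astab_point_stab (T : finType) (G : {group {perm T}}) a b :
  'C_('C_G[a | 'P])[b | 'P] = 'C_G([set a; b] | 'P).
Proof. by apply/setP=> g; rewrite !inE subUset /= !andbA. Qed.

Section QuasiTransitive.

Variables (T : finType) (G : {group {perm T}}) (t : nat).
Hypothesis qtG : quasi_transitive_with G t.

Lemma card_orbit_point_stab a b :
  a != b -> (#|orbit 'P 'C_G[a | 'P] b| * t)%N = #|'C_G[a | 'P]|.
Proof.
case: qtG => _ card2 neq_ab.
by rewrite -(card2 a b neq_ab) -astab_point_stab card_orbit_stab.
Qed.

Lemma point_stab_card_gt a b : a != b -> t < #|'C_G[a | 'P]|.
Proof.
case: qtG => t_gt1 card2 neq_ab.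
have sub_pair_stab z : 'C_G([set a; z] | 'P) \subset 'C_G[a | 'P].
  by rewrite -astab_point_stab subsetIl.
rewrite ltn_neqAle -(card2 a b neq_ab) subset_leq_card // andbT.
apply/eqP=> eq_card.
have stab_trivial : 'C_G[a | 'P] = 1.
  apply/trivgP/subsetP=> g Ga_g; rewrite inE; apply/eqP/permP=> z; rewrite perm1.
  have [<- | neq_az] := eqVneq a z; first by case/setIP: Ga_g => _ /astab1P.
  have stab_az : 'C_G([set a; z] | 'P) = 'C_G[a | 'P].
    by apply/eqP; rewrite eqEcard sub_pair_stab -eq_card !card2 ?leqnn.
  have : g \in 'C_G([set a; z] | 'P) by rewrite stab_az.
  by case/setIP=> _ /astabP; apply; rewrite !inE eqxx orbT.
by move: t_gt1; rewrite -(card2 a b neq_ab) eq_card stab_trivial cards1.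
Qed.

Lemma card_point_stab_ntransitive2 D a :
  [transitive^2 G, on D | 'P] -> a \in D -> #|'C_G[a | 'P]| = ((#|D| - 1) * t)%N.
Proof.
move=> trG2 Da.
have trGa : [transitive 'C_G[a | 'P], on D :\ a | 'P].
  exact: ntransitive1 (stab_ntransitive (ltn0Sn 0) Da trG2).
have [b Dab] : exists b, b \in D :\ a.
  apply/set0Pn; rewrite -card_gt0 -ltnS.
  by have := ntransitive2_card_gt1 trG2; rewrite (cardsD1 a D) Da.
have neq_ab : a != b by move: Dab; rewrite !inE eq_sym => /andP[].
rewrite -(card_orbit_point_stab neq_ab) (atransP trGa b Dab).
by rewrite (cardsD1 a D) Da add1n subn1.
Qed.

Lemma card_ntransitive2 D :
  [transitive^2 G, on D | 'P] -> #|G| = (#|D| * (#|D| - 1) * t)%N.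
Proof.
move=> trG2; have trG := ntransitive1 (ltn0Sn 1) trG2.
have [a Da _] := imsetP trG.
rewrite -(card_orbit_stab 'P G a) (atransP trG a Da).
by rewrite (card_point_stab_ntransitive2 trG2 Da) mulnA.
Qed.

Lemma ntransitive2_orbit_unique D1 D2 :
  [transitive^2 G, on D1 | 'P] -> [transitive^2 G, on D2 | 'P] -> D1 = D2.
Proof.
move=> tr2_D1 tr2_D2; have [t_gt1 _] := qtG; have t_gt0 := ltnW t_gt1.
have [tr_D1 tr_D2] := (ntransitive1 (ltn0Sn 1) tr2_D1, ntransitive1 (ltn0Sn 1) tr2_D2).
have [n1_gt1 n2_gt1] := (ntransitive2_card_gt1 tr2_D1, ntransitive2_card_gt1 tr2_D2).
have eq_n : #|D1| = #|D2|.
  apply: mul_pred_inj; rewrite ?(ltnW n1_gt1) ?(ltnW n2_gt1) //.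
  apply/eqP; rewrite -(eqn_pmul2r t_gt0).
  by rewrite -(card_ntransitive2 tr2_D1) -(card_ntransitive2 tr2_D2).
have [a D1a _] := imsetP tr_D1.
have [D2a | notD2a] := boolP (a \in D2).
  by rewrite -(atransP tr_D1 a D1a) (atransP tr_D2 a D2a).
have neq_a c : c \in D2 -> a != c.
  by move=> D2c; apply: contraNneq notD2a => ->.
have cardGa := card_point_stab_ntransitive2 tr2_D1 D1a.
have m_gt1 : 1 < #|D1| - 1.
  have [b D2b _] := imsetP tr_D2.
  have := point_stab_card_gt (neq_a b D2b).
  by rewrite cardGa -{1}(mul1n t) (ltn_pmul2r t_gt0).
have actsGa : [acts 'C_G[a | 'P], on D2 | 'P].
  exact: subset_trans (subsetIl _ _) (atrans_acts tr_D2).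
have orbitsGa : {in D2, forall c, #|orbit 'P 'C_G[a | 'P] c| = (#|D1| - 1)%N}.
  move=> c D2c; apply/eqP.
  by rewrite -(eqn_pmul2r t_gt0) card_orbit_point_stab ?neq_a // cardGa.
have := uniform_orbits_dvdn actsGa orbitsGa.
rewrite -eq_n -{2}(subnK (ltnW n1_gt1)) (dvdn_addr _ (dvdnn _)) dvdn1.
by rewrite gtn_eqF.
Qed.

End QuasiTransitive.

Theorem mainTheorem5 (T : finType) (G : {group {perm T}}) (t : nat) :
  quasi_transitive_with G t ->
  ~~ [transitive G, on [set: T] | 'P] ->
  (forall D : {set T}, is_orbit G D -> [transitive^2 G, on D | 'P] ->
     #|G|%N = (#|D| * (#|D| - 1) * t)%N) /\
  (forall D1 D2 : {set T}, is_orbit G D1 -> is_orbit G D2 ->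
     [transitive^2 G, on D1 | 'P] -> [transitive^2 G, on D2 | 'P] -> D1 = D2).
Proof.
move=> qtG _; split=> [D _ | D1 D2 _ _].
  exact: card_ntransitive2 qtG D.
exact: ntransitive2_orbit_unique qtG D1 D2.
Qed.
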